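(* Let $(\mathcal{C},P)$ be a doctrine satisfying AC, such that $\mathcal{C}$ has a stable initial object $0$ and every poset $P(A)$ is non-empty. Then every arrow $k:X\to 0$ in $\mathcal{C}$ is an isomorphism.
   Context: A doctrine is a pair $(\mathcal{C},P)$, $\mathcal{C}$ a category with finite products (terminal object $1$), $P:\mathcal{C}^{op}\to\mathbf{Pos}$ a functor, $f^*=P(f)$. An object $0$ is a stable initial object if it is initial and $X\times0\cong0$ for every $X$. $(\mathcal{C},P)$ satisfies the axiom of choice (AC) if for every object $A$ which is not a stable initial object and every object $\Gamma$, the functor $\pi_\Gamma^*$ (for the projection $\pi_\Gamma:\Gamma\times A\to\Gamma$) has a left adjoint $\Sigma_{\pi_\Gamma}$ (i.e. $\psi\le\pi_\Gamma^*\Sigma_{\pi_\Gamma}\psi$ and $\Sigma_{\pi_\Gamma}\pi_\Gamma^*\beta\le\beta$) and for every $\psi\in P(\Gamma\times A)$ there is an arrow $\epsilon_\psi:\Gamma\to A$ with $\Sigma_{\pi_\Gamma}\psi=\langle id_\Gamma,\epsilon_\psi\rangle^*\psi$. *)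

(** Categories, with Leibniz equality of arrows. [comp g f] is g ∘ f. *)
Record Category := {
  Obj :> Type;
  Hom : Obj -> Obj -> Type;
  idC : forall A, Hom A A;
  comp : forall A B D, Hom B D -> Hom A B -> Hom A D;
  comp_id_l : forall A B (f : Hom A B), comp A B B (idC B) f = f;
  comp_id_r : forall A B (f : Hom A B), comp A A B f (idC A) = f;
  comp_assoc : forall A B E D (h : Hom E D) (g : Hom B E) (f : Hom A B),
      comp A E D h (comp A B E g f) = comp A B D (comp B E D h g) f
}.

Arguments Hom {c} _ _ : rename.
Arguments idC {c} A : rename.
Arguments comp {c A B D} _ _ : rename.

Record FinProducts (C : Category) := {
  term : C;
  bang : forall X : C, Hom X term;
  bang_unique : forall X (f : Hom X term), f = bang X;
  prod : C -> C -> C;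
  pi1 : forall A B, Hom (prod A B) A;
  pi2 : forall A B, Hom (prod A B) B;
  pair : forall X A B, Hom X A -> Hom X B -> Hom X (prod A B);
  pair_pi1 : forall X A B (f : Hom X A) (g : Hom X B),
      comp (pi1 A B) (pair X A B f g) = f;
  pair_pi2 : forall X A B (f : Hom X A) (g : Hom X B),
      comp (pi2 A B) (pair X A B f g) = g;
  pair_unique : forall X A B (h : Hom X (prod A B)),
      pair X A B (comp (pi1 A B) h) (comp (pi2 A B) h) = h
}.

Arguments term {C} _.
Arguments bang {C} _ X.
Arguments prod {C} _ _ _.
Arguments pi1 {C} _ A B.
Arguments pi2 {C} _ A B.
Arguments pair {C} _ {X A B} _ _.

(** A doctrine: a functor P : C^op -> Pos (posets and monotone maps).
    [reindex f] is f^* = P(f). *)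
Record Doctrine (C : Category) := {
  Pd : C -> Type;
  le : forall A, Pd A -> Pd A -> Prop;
  le_refl : forall A (x : Pd A), le A x x;
  le_trans : forall A (x y z : Pd A), le A x y -> le A y z -> le A x z;
  le_antisym : forall A (x y : Pd A), le A x y -> le A y x -> x = y;
  reindex : forall A B, Hom A B -> Pd B -> Pd A;
  reindex_mono : forall A B (f : Hom A B) (x y : Pd B),
      le B x y -> le A (reindex A B f x) (reindex A B f y);
  reindex_id : forall A (x : Pd A), reindex A A (idC A) x = x;
  reindex_comp : forall A B D (f : Hom A B) (g : Hom B D) (x : Pd D),
      reindex A D (comp g f) x = reindex A B f (reindex B D g x)
}.

Arguments Pd {C} _ _.
Arguments le {C} _ {A} _ _.
Arguments reindex {C} _ {A B} _ _.

Definition is_iso {C : Category} {A B : C} (f : Hom A B) : Prop :=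
  exists g : Hom B A, comp g f = idC A /\ comp f g = idC B.

Definition isomorphic {C : Category} (A B : C) : Prop :=
  exists f : Hom A B, is_iso f.

Definition is_initial {C : Category} (Z : C) : Prop :=
  forall X : C, exists f : Hom Z X, forall g : Hom Z X, g = f.

Definition stable_initial {C : Category} (FP : FinProducts C) (Z : C) : Prop :=
  is_initial Z /\ forall X : C, isomorphic (prod FP X Z) Z.

(** Axiom of choice for a doctrine (C, P): for every A that is not a stable
    initial object and every Γ, π_Γ^* : P Γ -> P(Γ × A) has a left adjoint
    Σ (unit and counit inequalities) and every Σ ψ is of the form
    ⟨id, ε_ψ⟩^* ψ for some ε_ψ : Γ -> A. *)
Definition satisfies_AC {C : Category} (FP : FinProducts C) (P : Doctrine C) : Prop :=
  forall (A : C), ~ stable_initial FP A ->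
  forall (G : C),
    exists Sigma : Pd P (prod FP G A) -> Pd P G,
      (forall psi, le P psi (reindex P (pi1 FP G A) (Sigma psi))) /\
      (forall beta, le P (Sigma (reindex P (pi1 FP G A) beta)) beta) /\
      (forall psi, exists eps : Hom G A,
          Sigma psi = reindex P (pair FP (idC G) eps) psi).

(** A stable initial object is strict: for [k : X -> 0] the pairing [<id, k>]
    exhibits [X] as a retract of [X × 0 ≅ 0], so arrows out of [X] are unique,
    and then [k] is inverse to the unique arrow [0 -> X]. *)


Definition hom_from_subsingleton {C : Category} (W : C) : Prop :=
  forall (Y : C) (f g : Hom W Y), f = g.

Lemma initial_hom_from_subsingleton {C : Category} (Z : C) :
  is_initial Z -> hom_from_subsingleton Z.
Proof.
  intros HZ Y f g.
  destruct (HZ Y) as [h Hh].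
  now rewrite (Hh f), (Hh g).
Qed.

Lemma hom_from_subsingleton_retract {C : Category} (X W : C)
    (s : Hom X W) (r : Hom W X) :
  comp r s = idC X -> hom_from_subsingleton W -> hom_from_subsingleton X.
Proof.
  intros Hrs HW Y f g.
  rewrite <- (comp_id_r _ _ _ f), <- (comp_id_r _ _ _ g), <- Hrs, !comp_assoc.
  f_equal; apply HW.
Qed.

Lemma iso_hom_from_subsingleton {C : Category} (W Z : C) (j : Hom W Z) :
  is_iso j -> hom_from_subsingleton Z -> hom_from_subsingleton W.
Proof.
  intros [j' [Hj'j _]].
  exact (hom_from_subsingleton_retract W Z j j' Hj'j).
Qed.

Lemma is_iso_to_initial {C : Category} (X Z : C) (k : Hom X Z) :
  is_initial Z -> hom_from_subsingleton X -> is_iso k.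
Proof.
  intros HZ HX.
  destruct (HZ X) as [g _].
  exists g; split.
  - apply HX.
  - now apply initial_hom_from_subsingleton.
Qed.

Lemma stable_initial_strict {C : Category} (FP : FinProducts C) (Z : C) :
  stable_initial FP Z -> forall (X : C) (k : Hom X Z), is_iso k.
Proof.
  intros [HZ Hstable] X k.
  apply is_iso_to_initial; [exact HZ |].
  destruct (Hstable X) as [j Hj].
  apply (hom_from_subsingleton_retract X (prod FP X Z)
           (pair FP (idC X) k) (pi1 FP X Z)).
  - apply pair_pi1.
  - apply (iso_hom_from_subsingleton _ Z j Hj).
    now apply initial_hom_from_subsingleton.
Qed.

Theorem mainTheorem5 (C : Category) (FP : FinProducts C) (P : Doctrine C)
  (HAC : satisfies_AC FP P)
  (Z : C) (HZ : stable_initial FP Z)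
  (Hne : forall A : C, inhabited (Pd P A)) :
  forall (X : C) (k : Hom X Z), is_iso k.
Proof.
  exact (stable_initial_strict FP Z HZ).
Qed.
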